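(* Let $M$ be a $\pi$-projective right $R$-module. Then $M$ is principally Goldie*-lifting if and only if every cyclic submodule $X$ of $M$ can be written as $X=D\oplus A$ where $D$ is a direct summand of $M$ and $A\ll M$.
   Context: $R$ is an associative ring with identity; modules are unital right $R$-modules. $M$ is $\pi$-projective if for all submodules $U,V$ with $U+V=M$ there exists $f\in\mathrm{End}(M)$ with $f(M)\subseteq U$ and $(1-f)(M)\subseteq V$. $K\ll M$ means $K$ is small in $M$. For submodules $X,Y$ of $M$, $X\,\beta^*\,Y$ means $(X+Y)/X\ll M/X$ and $(X+Y)/Y\ll M/Y$. $M$ is principally Goldie*-lifting if for every cyclic submodule $X$ there is a direct summand $D$ of $M$ with $X\,\beta^*\,D$. *)

(* A unital right R-module is modelled as a left module over
   the converse ring R^c (R^c): the action  m·r  is written  r *: m. *)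
From HB Require Import structures.
From mathcomp Require Import all_boot all_order all_algebra.
Set Implicit Arguments. Unset Strict Implicit. Unset Printing Implicit Defensive.
Import GRing.Theory.
Local Open Scope ring_scope.

Section ModuleNotions.
Variables (R : pzRingType) (M : lmodType R^c).

Definition subm := M -> Prop.
Definition sincl (U V : subm) := forall x, U x -> V x.
Definition seq_ (U V : subm) := forall x, U x <-> V x.
Definition stop : subm := fun _ => True.
Definition szero : subm := fun x => x = 0.
Definition ssum (U V : subm) : subm := fun x => exists u v, U u /\ V v /\ x = u + v.
Definition scap (U V : subm) : subm := fun x => U x /\ V x.

Definition is_submodule (U : subm) :=
  U 0 /\ (forall x y, U x -> U y -> U (x + y)) /\
  (forall (r : R) x, U x -> U ((r : R^c) *: x)).

Definition cyclic_sub (X : subm) :=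
  exists m : M, seq_ X (fun x => exists r : R, x = (r : R^c) *: m).

Definition small (K : subm) :=
  is_submodule K /\
  forall L, is_submodule L -> seq_ (ssum K L) stop -> seq_ L stop.

(* For submodules X <= K of M:  K/X << M/X, via the correspondence between
   submodules of M/X and submodules of M containing X. *)
Definition small_mod (X K : subm) :=
  forall L, is_submodule L -> sincl X L -> seq_ (ssum K L) stop -> seq_ L stop.

Definition beta_star (X Y : subm) :=
  small_mod X (ssum X Y) /\ small_mod Y (ssum X Y).

Definition direct_summand (D : subm) :=
  is_submodule D /\ exists D', is_submodule D' /\
    seq_ (ssum D D') stop /\ seq_ (scap D D') szero.

Definition pi_projective :=
  forall U V, is_submodule U -> is_submodule V -> seq_ (ssum U V) stop ->
  exists f : {linear M -> M}, (forall m, U (f m)) /\ (forall m, V (m - f m)).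

Definition principally_goldie_star_lifting :=
  forall X, cyclic_sub X -> exists D, direct_summand D /\ beta_star X D.

End ModuleNotions.

(* If X beta* D with M = D (+) D', then X + D' = M, so pi-projectivity gives an
   endomorphism f with f(M) <= X and (1 - f)(M) <= D'.  The image f(D) is again
   a complement of D', and X = f(D) (+) (X :&: D'); smallness of X :&: D' in M
   comes from (X + D) / D being small in M / D.  Conversely, if
   X = D (+) A with A small, then X beta* D holds because D <= X and A is small. *)
From HB Require Import structures.
From mathcomp Require Import all_boot all_order all_algebra.
Import GRing.Theory.
Local Open Scope ring_scope.
Set Implicit Arguments. Unset Strict Implicit.

Section Submodules.
Variables (R : pzRingType) (M : lmodType R^c).
Implicit Types U V X D A L : subm M.

Definition simage (f : M -> M) U : subm M := fun y => exists2 u, U u & y = f u.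

Lemma submod0 U : is_submodule U -> U 0.
Proof. by case. Qed.

Lemma submodD U x y : is_submodule U -> U x -> U y -> U (x + y).
Proof. by case=> _ [hD _]; apply: hD. Qed.

Lemma submodZ U (r : R) x : is_submodule U -> U x -> U ((r : R^c) *: x).
Proof. by case=> _ [_ hZ]; apply: hZ. Qed.

Lemma submodN U x : is_submodule U -> U x -> U (- x).
Proof. by move=> hU Ux; rewrite -scaleN1r; apply: submodZ. Qed.

Lemma submodB U x y : is_submodule U -> U x -> U y -> U (x - y).
Proof. by move=> hU Ux Uy; apply: submodD => //; apply: submodN. Qed.

Lemma seq_topP U : seq_ U (@stop R M) <-> forall m, U m.
Proof. by split=> [hU m | hU m]; [apply/hU | split]. Qed.

Lemma ssuml U V u : is_submodule V -> U u -> ssum U V u.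
Proof. by move=> hV Uu; exists u, 0; rewrite addr0; do !split=> //; apply: submod0. Qed.

Lemma ssumr U V v : is_submodule U -> V v -> ssum U V v.
Proof. by move=> hU Vv; exists 0, v; rewrite add0r; do !split=> //; apply: submod0. Qed.

Lemma ssum_sincl U V W :
  is_submodule W -> sincl U W -> sincl V W -> sincl (ssum U V) W.
Proof. by move=> hW UW VW _ [u [v [Uu [Vv ->]]]]; apply: submodD; [|apply: UW|apply: VW]. Qed.

Lemma scap_eq0 U V x : seq_ (scap U V) (@szero R M) -> U x -> V x -> x = 0.
Proof. by move=> UV0 Ux Vx; apply/UV0. Qed.

Lemma scap0_subr U V W :
  is_submodule U -> is_submodule W -> sincl W V ->
  seq_ (scap U V) (@szero R M) -> seq_ (scap U W) (@szero R M).
Proof.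
move=> hU hW WV UV0 x; split=> [[Ux Wx] | ->]; first exact: scap_eq0 UV0 Ux (WV x Wx).
by split; apply: submod0.
Qed.

Lemma ssum_submodule U V :
  is_submodule U -> is_submodule V -> is_submodule (ssum U V).
Proof.
move=> hU hV; split; first exact: ssuml (submod0 hU).
split=> [x y [u [v [Uu [Vv ->]]]] [u' [v' [Uu' [Vv' ->]]]] | r x [u [v [Uu [Vv ->]]]]].
  exists (u + u'), (v + v'); rewrite addrACA.
  by split; last split=> //; apply: submodD.
exists ((r : R^c) *: u), ((r : R^c) *: v); rewrite scalerDr.
by split; last split=> //; apply: submodZ.
Qed.

Lemma scap_submodule U V :
  is_submodule U -> is_submodule V -> is_submodule (scap U V).
Proof.
move=> hU hV; split; first by split; apply: submod0.
by split=> [x y [Ux Vx] [Uy Vy] | r x [Ux Vx]]; split;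
  apply: submodD || apply: submodZ.
Qed.

Lemma cyclic_submodule X : cyclic_sub X -> is_submodule X.
Proof.
case=> m hX; split; first by apply/hX; exists 0; rewrite scale0r.
split=> [x y /hX [r ->] /hX [s ->] | r x /hX [s ->]]; apply/hX.
  by exists (r + s); rewrite scalerDl.
by exists ((r : R^c) * s); rewrite scalerA.
Qed.

Lemma simage_submodule (f : {linear M -> M}) U :
  is_submodule U -> is_submodule (simage f U).
Proof.
move=> hU; split; first by exists 0; [apply: submod0 | rewrite linear0].
split=> [x y [u Uu ->] [v Vv ->] | r x [u Uu ->]].
  by exists (u + v); [apply: submodD | rewrite linearD].
by exists ((r : R^c) *: u); [apply: submodZ | rewrite linearZ].
Qed.

Lemma small_mod_sub X K : sincl K X -> small_mod X K.
Proof.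
move=> KX L hL XL /seq_topP KL; apply/seq_topP => m.
by have [k [l [Kk [Ll ->]]]] := KL m; apply: submodD => //; apply: XL; apply: KX.
Qed.

Lemma small_mod_small_complement X D A :
  is_submodule D -> small A -> sincl X (ssum D A) -> small_mod D (ssum X D).
Proof.
move=> hD [hA smallA] XDA L hL DL /seq_topP XDL; apply: smallA => //.
apply/seq_topP => m; have [_ [l [[x [d [Xx [Dd ->]]]] [Ll ->]]]] := XDL m.
have [d' [a [Dd' [Aa ->]]]] := XDA x Xx.
exists a, (d' + d + l); split=> //; split; last by rewrite (addrC d') -!addrA.
by apply: submodD => //; apply: submodD => //; apply: DL.
Qed.

Lemma small_mod_complement_top X D D' :
  is_submodule X -> is_submodule D' -> small_mod X (ssum X D) ->
  seq_ (ssum D D') (@stop R M) -> seq_ (ssum X D') (@stop R M).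
Proof.
move=> hX hD' smallX /seq_topP DD'; apply: smallX.
- exact: ssum_submodule.
- by move=> x; apply: ssuml.
apply/seq_topP => m; have [d [d' [Dd [D'd' ->]]]] := DD' m.
by exists (0 + d), (0 + d'); rewrite !add0r; split; [apply: ssumr | split=> //; apply: ssumr].
Qed.

Lemma small_cap_complement X D D' :
  is_submodule X -> is_submodule D -> is_submodule D' ->
  seq_ (ssum D D') (@stop R M) -> seq_ (scap D D') (@szero R M) ->
  small_mod D (ssum X D) -> small (scap X D').
Proof.
move=> hX hD hD' /seq_topP DD' DD'0 smallD.
split=> [|L hL /seq_topP XD'L]; first exact: scap_submodule.
have LD'D : seq_ (ssum D (scap L D')) (@stop R M).
  apply: smallD; first by apply: ssum_submodule => //; apply: scap_submodule.
    by move=> d; apply: ssuml; apply: scap_submodule.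
  apply/seq_topP => m; have [d [d' [Dd [D'd' ->]]]] := DD' m.
  have [a [l [[Xa D'a] [Ll ed']]]] := XD'L d'.
  have D'l : D' l by rewrite -(addKr a l) -ed'; apply: submodD => //; apply: submodN.
  exists (a + d), l; rewrite ed' addrCA addrA; split; first by exists a, d.
  by split=> //; apply: ssumr => //; apply: scap_submodule.
apply/seq_topP => m; have [a [l [[Xa D'a] [Ll ->]]]] := XD'L m.
have [d [l' [Dd [[Ll' D'l'] ea]]]] := proj2 (LD'D a) I.
have d0 : d = 0 by apply: scap_eq0 DD'0 Dd _; rewrite -(addrK l' d) -ea; apply: submodB.
by move: ea; rewrite d0 add0r => ->; apply: submodD.
Qed.

Section ProjectionOntoSummand.
Variables (X D D' : subm M) (f : {linear M -> M}).
Hypotheses (hX : is_submodule X) (hD : is_submodule D) (hD' : is_submodule D').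
Hypotheses (DD' : seq_ (ssum D D') (@stop R M)) (DD'0 : seq_ (scap D D') (@szero R M)).
Hypotheses (fX : forall m, X (f m)) (fD' : forall m, D' (m - f m)).

Lemma simage_cap_complement0 : seq_ (scap (simage f D) D') (@szero R M).
Proof.
move=> y; split=> [[[d Dd ->] D'fd] | ->]; last first.
  by split; [exists 0; [apply: submod0 | rewrite linear0] | apply: submod0].
have -> : d = 0 by apply: scap_eq0 DD'0 Dd _; rewrite -(subrK (f d) d); apply: submodD.
exact: linear0.
Qed.

Lemma simage_complement_top : seq_ (ssum (simage f D) D') (@stop R M).
Proof.
apply/seq_topP => m; have [d [d' [Dd [D'd' ->]]]] := proj2 (DD' m) I.
exists (f d), (d - f d + d'); split; first by exists d.
by split; [exact: submodD hD' (fD' d) D'd' | rewrite addrA subrKC].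
Qed.

Lemma simage_cap_decomposition :
  seq_ X (ssum (simage f D) (scap X D')).
Proof.
move=> x; split=> [Xx | [_ [a [[d _ ->] [[Xa _] ->]]]]]; last exact: submodD.
have [d [d' [Dd [D'd' ex]]]] := proj2 (DD' x) I.
exists (f d), (x - f d); split; first by exists d.
split; last by rewrite subrKC.
split; first exact: submodB.
by rewrite ex addrAC; exact: submodD hD' (fD' d) D'd'.
Qed.

End ProjectionOntoSummand.

End Submodules.

Theorem proposition3p17 (R : pzRingType) (M : lmodType R^c) :
  pi_projective M ->
  (principally_goldie_star_lifting M <->
   forall X : subm M, cyclic_sub X ->
     exists D A : subm M, direct_summand D /\ small A /\
       seq_ X (ssum D A) /\ seq_ (scap D A) (@szero R M)).
Proof.
move=> piM; split=> lift X cX; have hX := cyclic_submodule cX.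
- have [D [[hD [D' [hD' [DD' DD'0]]]] [smallX smallD]]] := lift X cX.
  have XD' := small_mod_complement_top hX hD' smallX DD'.
  have [f [fX fD']] := piM X D' hX hD' XD'.
  have fDD'0 := simage_cap_complement0 hD hD' DD'0 fD'.
  exists (simage f D), (scap X D'); split.
    split; first exact: simage_submodule.
    exists D'; split=> //; split=> //.
    exact: simage_complement_top fD'.
  split; first exact: small_cap_complement hX hD hD' DD' DD'0 smallD.
  split; first exact: simage_cap_decomposition hX hD' DD' fX fD'.
  by apply: scap0_subr fDD'0 => //; [apply: simage_submodule | apply: scap_submodule | move=> y []].
- have [D [A [[hD summD] [smallA [XDA _]]]]] := lift X cX.
  have DX : sincl D X by move=> d Dd; apply/XDA; apply: ssuml (proj1 smallA) Dd.
  exists D; split; first by split.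
  split; first by apply: small_mod_sub; apply: ssum_sincl.
  exact: small_mod_small_complement hD smallA (fun x Xx => proj1 (XDA x) Xx).
Qed.
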